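(* Let $D_8=\langle a,b\mid a^4=b^2=1,\ b^{-1}ab=a^{-1}\rangle$ be the dihedral group of order 8. The following d-identities form a basis of d-identities of $D_8$ (i.e. they all hold in $D_8$, and every group satisfying all of them is isomorphic to a section of $D_8$): (1) $\omega_8=\bigvee_{0\le i<j\le 8}(x_i=x_j)$; (2) $x^4=1$; (3) $(x_1^2=1)\vee(x_2^2=1)\vee(x_3^2=1)\vee(x_1=x_2)\vee(x_1=x_3)\vee(x_2=x_3)$; (4) $\Big[\bigvee_{i\ne j}x_i\in\langle x_j\rangle\Big]\vee\Big[\bigvee_{\sigma\in S_3}x_{\sigma(1)}\in\langle x_{\sigma(2)}x_{\sigma(3)}\rangle\Big]\vee\Big[\bigvee_{\sigma\in S_3}x_{\sigma(1)}x_{\sigma(2)}\in\langle x_{\sigma(2)}x_{\sigma(3)}\rangle\Big]$, with $i,j\in\{1,2,3\}$.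
   Context: A d-identity (disjunctive identity) is a universally quantified formula $\forall x_1\dots x_k\,[(f_1=1)\vee\dots\vee(f_n=1)]$ with the $f_i$ words in the free group on the variables; $u=v$ abbreviates $uv^{-1}=1$. A group satisfies it if it is true for all assignments. For a group $G$, $\mathrm{dvar}(G)$ is the class of groups satisfying every d-identity satisfied by $G$; for finite $G$ it is the class of groups isomorphic to sections (quotients of subgroups) of $G$. A set of d-identities is a basis of d-identities of $G$ if all its members hold in $G$ and every group satisfying them lies in $\mathrm{dvar}(G)$. Notation: ''$u\in\langle v\rangle$'' abbreviates $(u=1)\vee(u=v)\vee(u=v^2)\vee(u=v^3)$. *)

From Stdlib Require List.
From mathcomp Require Import all_boot all_fingroup extremal.
Set Implicit Arguments. Unset Strict Implicit. Unset Printing Implicit Defensive.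

Record Grp := MkGrp {
  gcar :> Type;
  gmul : gcar -> gcar -> gcar;
  ginv : gcar -> gcar;
  gone : gcar;
  gmulA : forall x y z, gmul x (gmul y z) = gmul (gmul x y) z;
  gmul1 : forall x, gmul gone x = x;
  gmulV : forall x, gmul (ginv x) x = gone
}.

Inductive word := Var of nat | One | Mul of word & word | Inv of word.

Fixpoint weval (T : Type) (mul : T -> T -> T) (inv : T -> T) (one : T)
  (s : nat -> T) (w : word) : T :=
  match w with
  | Var n => s n
  | One => one
  | Mul u v => mul (weval mul inv one s u) (weval mul inv one s v)
  | Inv u => inv (weval mul inv one s u)
  end.

(* A d-identity  forall x, (f_1 = 1) \/ ... \/ (f_n = 1), given by [f_1;..;f_n]. *)
Notation didentity := (seq word).

Definition holds (G : Grp) (d : didentity) : Prop :=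
  forall s : nat -> G, exists2 w, List.In w d & weval (@gmul G) (@ginv G) (@gone G) s w = @gone G.

Definition fholds (gT : finGroupType) (d : didentity) : Prop :=
  forall s : nat -> gT, exists2 w, List.In w d & weval (fun x y : gT => (x * y)%g) (fun x : gT => (x^-1)%g) (1%g : gT) s w = 1%g.

(* u = v abbreviates u v^{-1} = 1 *)
Definition weq (u v : word) : word := Mul u (Inv v).
(* u \in <v> abbreviates (u=1) \/ (u=v) \/ (u=v^2) \/ (u=v^3) *)
Definition wmem (u v : word) : seq word :=
  [:: u; weq u v; weq u (Mul v v); weq u (Mul (Mul v v) v)].

Definition omega8 : didentity :=
  flatten [seq [seq weq (Var i) (Var j) | j <- iota i.+1 (8 - i)] | i <- iota 0 9].

Definition id2 : didentity :=
  [:: Mul (Mul (Var 0) (Var 0)) (Mul (Var 0) (Var 0))].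

Definition id3 : didentity :=
  [:: Mul (Var 1) (Var 1); Mul (Var 2) (Var 2); Mul (Var 3) (Var 3);
      weq (Var 1) (Var 2); weq (Var 1) (Var 3); weq (Var 2) (Var 3)].

Definition perms3 : seq (nat * nat * nat) :=
  [:: (1,2,3); (1,3,2); (2,1,3); (2,3,1); (3,1,2); (3,2,1)].

Definition id4 : didentity :=
  flatten (flatten [seq [seq (if i == j then [::] else wmem (Var i) (Var j)) | j <- [:: 1; 2; 3]]
          | i <- [:: 1; 2; 3]]) ++
  flatten [seq (let: (a, b, c) := p in wmem (Var a) (Mul (Var b) (Var c))) | p <- perms3] ++
  flatten [seq (let: (a, b, c) := p in
                wmem (Mul (Var a) (Var b)) (Mul (Var b) (Var c))) | p <- perms3].

Definition iso_section (gT0 : finGroupType) (G : Grp) : Prop :=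
  exists (H K : {group gT0}), (K <| H)%g /\
  exists f : G -> coset_of K,
    [/\ injective f,
        forall x, f x \in (H / K)%g,
        forall y, y \in (H / K)%g -> exists x, f x = y
      & forall x y, f (gmul x y) = (f x * f y)%g].

From HB Require Import structures.
From mathcomp Require Import all_boot all_fingroup cyclic extremal zify.
From Stdlib Require Import Classical ClassicalEpsilon.
Set Implicit Arguments. Unset Strict Implicit. Unset Printing Implicit Defensive.

(* By (1) a group G satisfying the identities has at most 8 elements, and by (2)
   its exponent divides 4. If some a has a^2 <> 1, then (3) applied to a, a^-1, t
   forces t^2 = 1 for every t outside {a, a^-1}; so either G = <a> is cyclic of
   order 4, or some b outside <a> satisfies b^2 = (ab)^2 = 1, the eight elements
   a^i b^j are distinct, and they exhaust G. If G has exponent 2 it is elementary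
   abelian and (4) fails in C2^3, so G has at most four elements a^i b^j. In all
   cases G is a homomorphic image of D8 or of its cyclic subgroup of order 4, hence
   a section of D8. Conversely D8 has 8 elements, and (2)-(4) are verified by
   computation in the coordinates a^i b^j of D8. *)

Section GroupTheory.
Variable G : Grp.
Implicit Types x y z : G.
Local Notation "x ** y" := (gmul x y) (at level 40, left associativity).
Local Notation e := (gone G).

Lemma gmulVr x : x ** ginv x = e.
Proof.
have -> : x ** ginv x = ginv (ginv x) ** ginv x ** (x ** ginv x) by rewrite gmulV gmul1.
by rewrite -gmulA (gmulA (ginv x)) gmulV gmul1 gmulV.
Qed.

Lemma gmul1r x : x ** e = x.
Proof. by rewrite -(gmulV x) gmulA gmulVr gmul1. Qed.

Lemma gmulI x y z : x ** y = x ** z -> y = z.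
Proof. by move=> h; rewrite -(gmul1 y) -(gmulV x) -gmulA h gmulA gmulV gmul1. Qed.

Lemma gmulIr x y z : y ** x = z ** x -> y = z.
Proof. by move=> h; rewrite -(gmul1r y) -(gmulVr x) gmulA h -gmulA gmulVr gmul1r. Qed.

Lemma gmulV_eq1 x y : x ** ginv y = e -> x = y.
Proof. by move=> h; rewrite -(gmul1r x) -(gmulV y) gmulA h gmul1. Qed.

Lemma ginv_eq x y : x ** y = e -> ginv x = y.
Proof. by move=> h; apply: (@gmulI x); rewrite gmulVr h. Qed.

Lemma ginvM x y : ginv (x ** y) = ginv y ** ginv x.
Proof. by apply: ginv_eq; rewrite -gmulA (gmulA y) gmulVr gmul1 gmulVr. Qed.

Fixpoint gpow x n := if n is n'.+1 then x ** gpow x n' else e.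

Lemma gpowD x m n : gpow x (m + n) = gpow x m ** gpow x n.
Proof. by elim: m => [|m IH]; rewrite ?gmul1 //= IH gmulA. Qed.

Lemma gpowM x m n : gpow x (n * m) = gpow (gpow x m) n.
Proof. by elim: n => [|n IH] //; rewrite mulSn gpowD IH. Qed.

Lemma gpow1n n : gpow e n = e.
Proof. by elim: n => //= n ->; rewrite gmul1. Qed.

Lemma gpow_mod x k n : gpow x k = e -> gpow x n = gpow x (n %% k).
Proof. by move=> xk; rewrite {1}(divn_eq n k) gpowD gpowM xk gpow1n gmul1. Qed.

End GroupTheory.

Lemma weval_morph (T : Type) (mul : T -> T -> T) (inv : T -> T) (one : T)
    (G : Grp) (h : T -> G) :
  (forall p q, h (mul p q) = gmul (h p) (h q)) ->
  (forall p, h (inv p) = ginv (h p)) -> h one = gone G ->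
  forall s w, weval (@gmul G) (@ginv G) (gone G) (fun n => h (s n)) w
              = h (weval mul inv one s w).
Proof.
move=> hM hV h1 s; elim=> [n||u IHu v IHv|u IHu] //=; first by rewrite IHu IHv hM.
by rewrite IHu hV.
Qed.

Fixpoint wvars (w : word) : seq nat :=
  match w with
  | Var n => [:: n]
  | One => [::]
  | Mul u v => wvars u ++ wvars v
  | Inv u => wvars u
  end.

Lemma eq_weval (T : Type) (mul : T -> T -> T) (inv : T -> T) (one : T) s s' w :
  {in wvars w, s =1 s'} -> weval mul inv one s w = weval mul inv one s' w.
Proof.
elim: w => [n||u IHu v IHv|u IHu] //= ss'; last by rewrite IHu.
  by apply: ss'; rewrite inE.
by rewrite IHu ?IHv // => n wn; apply: ss'; rewrite mem_cat wn ?orbT.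
Qed.

Lemma word_eq_dec (u v : word) : {u = v} + {u <> v}.
Proof. decide equality; exact: PeanoNat.Nat.eq_dec. Defined.
HB.instance Definition _ := hasDecEq.Build word (compareP word_eq_dec).

Lemma In_mem (s : seq word) w : List.In w s <-> w \in s.
Proof.
elim: s => [|u s IH] //=; rewrite inE; split.
  by case=> [->|/IH ->]; rewrite ?eqxx ?orbT.
by case/orP=> [/eqP->|/IH]; auto.
Qed.

Lemma omega8P w : List.In w omega8 ->
  exists i j, [/\ i < j, j <= 8 & w = weq (Var i) (Var j)].
Proof.
move/In_mem/flattenP=> [s /mapP[i i9 ->] /mapP[j ij ->]].
by exists i, j; move: i9 ij; rewrite !mem_iota => /andP[_ ?] /andP[? ?]; split=> //; lia.
Qed.

Lemma omega8_mem i j : i < j <= 8 -> List.In (weq (Var i) (Var j)) omega8.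
Proof.
move=> lt_ij; apply/In_mem/flattenP.
exists [seq weq (Var i) (Var j) | j <- iota i.+1 (8 - i)].
  by apply/mapP; exists i; rewrite // mem_iota; lia.
by apply/mapP; exists j; rewrite // mem_iota; lia.
Qed.

Lemma omega8_onto (G : Grp) (f : nat -> G) : holds G omega8 ->
  (forall i j, i < j < 8 -> f i <> f j) ->
  forall z, exists2 i, i < 8 & f i = z.
Proof.
move=> omega f_inj z; apply: NNPP => fz.
pose s n := if n < 8 then f n else z.
have [w /omega8P[i [j [lt_ij le_j8 ->]]] /= /gmulV_eq1] := omega s.
rewrite /s ifT; last by lia.
case: ltnP => [lt_j8|_ fiz]; first by apply: f_inj; rewrite lt_ij.
by apply: fz; exists i; first by lia.
Qed.

Lemma fholds_omega8 (gT : finGroupType) : #|gT| <= 8 -> fholds gT omega8.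
Proof.
move=> card_gT s.
have /injectivePn[i [j neq_ij sij]] : ~~ injectiveb (fun i : 'I_9 => s i).
  by apply: contraTN card_gT => /injectiveP/leq_card; rewrite card_ord -ltnNge.
wlog lt_ij : i j neq_ij sij / i < j.
  move=> wl; case: (ltngtP i j) => [|lt_ji|/val_inj eq_ij]; first exact: wl.
    by apply: (wl j i); rewrite // eq_sym.
  by rewrite eq_ij eqxx in neq_ij.
exists (weq (Var i) (Var j)); first by apply: omega8_mem; rewrite lt_ij -ltnS ltn_ord.
by rewrite /= sij mulgV.
Qed.

(* (i, j) stands for a^i b^j in D8 = <a, b | a^4 = b^2 = (ab)^2 = 1>, where
   b^j a^k = a^(k (-1)^j) b^j. *)
Definition cmul (c d : nat * nat) : nat * nat :=
  ((c.1 + d.1 * (if odd c.2 then 3 else 1)) %% 4, (c.2 + d.2) %% 2).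
Definition cinv (c : nat * nat) : nat * nat :=
  if odd c.2 then (c.1, 1) else ((4 - c.1 %% 4) %% 4, 0).
Definition cone : nat * nat := (0, 0).
Definition codes8 : seq (nat * nat) :=
  [:: (0, 0); (1, 0); (2, 0); (3, 0); (0, 1); (1, 1); (2, 1); (3, 1)].

Lemma mem_codes8 c : (c \in codes8) = (c.1 < 4) && (c.2 < 2).
Proof.
case: c => i j; apply/idP/idP; last by case/andP; case: i => [|[|[|[|]]]]; case: j => [|[|]].
by move: (i, j); apply/allP.
Qed.

Lemma mod_codes8 i j : (i %% 4, j %% 2) \in codes8.
Proof. by rewrite mem_codes8 !ltn_mod. Qed.

Lemma cmul_codes8 c d : cmul c d \in codes8.
Proof. exact: mod_codes8. Qed.

Lemma cmul_cinv_eq1 : {in codes8 &, forall c d, cmul (cinv c) d = cone -> c = d}.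
Proof.
have /allP chk : all (fun c => all (fun d => (cmul (cinv c) d == cone) ==> (c == d)) codes8) codes8.
  by [].
by move=> c d c8 d8 cd1; apply/eqP; move/allP: (chk c c8) => /(_ d d8); rewrite cd1 eqxx.
Qed.

Section DihedralWords.
Variables (G : Grp) (a b : G).
Local Notation "x ** y" := (gmul x y) (at level 40, left associativity).
Local Notation e := (gone G).

Definition abpow (c : nat * nat) := gpow a c.1 ** gpow b c.2.

Hypotheses (a4 : gpow a 4 = e) (b2 : b ** b = e) (ab2 : (a ** b) ** (a ** b) = e).

Lemma abpow_cone : abpow cone = e.
Proof. by rewrite /abpow /= gmul1. Qed.

Lemma mulba : b ** a = gpow a 3 ** b.
Proof.
have a3 : ginv a = gpow a 3 by exact: ginv_eq a4.
have bab : b ** (a ** b) = gpow a 3.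
  by rewrite -a3; symmetry; apply: ginv_eq; rewrite gmulA.
by rewrite -bab -(gmul1r (b ** a)) -b2 !gmulA.
Qed.

Lemma bpow_apow j k :
  gpow b j ** gpow a k = gpow a (k * (if odd j then 3 else 1)) ** gpow b j.
Proof.
have b_apow n : b ** gpow a n = gpow a (3 * n) ** b.
  elim: n => [|n IH]; first by rewrite /= gmul1 gmul1r.
  by rewrite mulnS gpowD -[gpow a n.+1]/(a ** gpow a n) gmulA mulba -gmulA IH !gmulA.
elim: j => [|j IH]; first by rewrite /= muln1 gmul1 gmul1r.
rewrite /= -gmulA IH gmulA b_apow -gmulA (gpow_mod _ a4) [in RHS](gpow_mod _ a4).
by case: (odd j) => /=; congr (gpow a _ ** _); lia.
Qed.

Lemma abpowM c d : abpow (cmul c d) = abpow c ** abpow d.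
Proof.
have b_mod n : gpow b n = gpow b (n %% 2) by apply: gpow_mod; rewrite /= gmul1r.
rewrite /abpow /cmul /= -(gpow_mod _ a4) -b_mod -gmulA (gmulA (gpow b c.2)).
by rewrite bpow_apow -!gmulA !gpowD !gmulA.
Qed.

Lemma abpowV c : abpow (cinv c) = ginv (abpow c).
Proof.
symmetry; apply: ginv_eq; rewrite -abpowM -abpow_cone; congr abpow.
case: c => i j; rewrite /cinv /cmul /cone /=; case: ifP => odd_j /=.
  by congr pair; [lia | rewrite modn2 oddD odd_j].
by congr pair; [lia | rewrite addn0 modn2 odd_j].
Qed.

Lemma weval_abpow s w :
  weval (@gmul G) (@ginv G) e (fun n => abpow (s n)) w = abpow (weval cmul cinv cone s w).
Proof. exact: weval_morph abpowM abpowV abpow_cone s w. Qed.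

Hypothesis abpow_faithful : forall c, c \in codes8 -> abpow c = e -> c = cone.

Lemma abpow_inj : {in codes8 &, injective abpow}.
Proof.
move=> c d c8 d8 cd; apply: cmul_cinv_eq1 => //; apply: abpow_faithful.
  exact: cmul_codes8.
by rewrite abpowM abpowV cd gmulV.
Qed.

Lemma abpow_onto : holds G omega8 -> forall z, exists2 c, c \in codes8 & abpow c = z.
Proof.
move=> omega z.
have f_inj i j : i < j < 8 -> abpow (nth cone codes8 i) <> abpow (nth cone codes8 j).
  move=> /andP[lt_ij lt_j8] /abpow_inj; rewrite !mem_nth ?(ltn_trans lt_ij) //.
  by move=> /(_ isT isT) /eqP; rewrite nth_uniq ?(ltn_trans lt_ij) // ltn_eqF.
have [i lt_i8 <-] := omega8_onto omega f_inj z.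
by exists (nth cone codes8 i); first exact: mem_nth.
Qed.

End DihedralWords.

Definition eq1b (G : Grp) (g : G) : bool :=
  if excluded_middle_informative (g = gone G) then true else false.

Lemma eq1bP (G : Grp) (g : G) : reflect (g = gone G) (eq1b g).
Proof. by rewrite /eq1b; case: excluded_middle_informative => h; constructor. Qed.

Section OntoMorphism.
Local Open Scope group_scope.
Variables (gT : finGroupType) (G : Grp) (H : {group gT}) (pi : gT -> G).
Local Notation "x ** y" := (gmul x y) (at level 40, left associativity).
Local Notation e := (gone G).
Hypothesis piM : {in H &, forall u v, pi (u * v) = pi u ** pi v}.
Hypothesis pi_onto : forall z, exists u, u \in H /\ pi u = z.

Lemma morph_pi1 : pi 1 = e.
Proof. by apply: (@gmulI _ (pi 1)); rewrite -piM ?mulg1 ?gmul1r. Qed.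

Lemma morph_piV : {in H, forall u, pi u^-1 = ginv (pi u)}.
Proof. by move=> u Hu; symmetry; apply: ginv_eq; rewrite -piM ?groupV // mulgV morph_pi1. Qed.

Definition ker_pi := [set u in H | eq1b (pi u)].

Lemma group_set_ker_pi : group_set ker_pi.
Proof.
apply/group_setP; split; first by rewrite inE group1; apply/eq1bP; exact: morph_pi1.
move=> u v; rewrite !inE => /andP[Hu /eq1bP pu] /andP[Hv /eq1bP pv].
by rewrite groupM //; apply/eq1bP; rewrite piM // pu pv gmul1.
Qed.
Canonical ker_pi_group := Group group_set_ker_pi.

Lemma normal_ker_pi : ker_pi <| H.
Proof.
apply/andP; split; first by apply/subsetP => u; rewrite inE => /andP[].
apply/subsetP => h Hh; rewrite inE; apply/subsetP => u; rewrite mem_conjg.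
rewrite !inE => /andP[Hu /eq1bP pu].
have {}Hu : u \in H by rewrite -(conjgKV h u) groupJ.
rewrite Hu; apply/eq1bP; move: pu.
rewrite conjgE invgK !piM ?groupM ?groupV // morph_piV // => /ginv_eq h1.
by apply: (@gmulIr _ (ginv (pi h))); rewrite gmul1 -h1.
Qed.

Lemma coset_ker_pi : {in H &, forall u v, coset ker_pi u = coset ker_pi v <-> pi u = pi v}.
Proof.
move=> u v Hu Hv; have nH := subsetP (normal_norm normal_ker_pi).
split=> [/(rcoset_kercosetP (nH u Hu) (nH v Hv))|puv].
  rewrite mem_rcoset inE piM ?groupV // morph_piV // => /andP[_ /eq1bP].
  exact: gmulV_eq1.
apply/(rcoset_kercosetP (nH u Hu) (nH v Hv)).
by rewrite mem_rcoset inE groupM ?groupV //=; apply/eq1bP; rewrite piM ?groupV // morph_piV // puv gmulVr.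
Qed.

Definition morph_pre (z : G) : gT := proj1_sig (constructive_indefinite_description _ (pi_onto z)).

Lemma morph_preP z : morph_pre z \in H /\ pi (morph_pre z) = z.
Proof. exact: proj2_sig (constructive_indefinite_description _ (pi_onto z)). Qed.

Lemma onto_morph_iso_section : iso_section gT G.
Proof.
exists H, [group of ker_pi]; split; first exact: normal_ker_pi.
exists (fun z => coset ker_pi (morph_pre z)); split.
- move=> z z'; have [Hz pz] := morph_preP z; have [Hz' pz'] := morph_preP z'.
  by move/coset_ker_pi; rewrite pz pz'; apply.
- by move=> z; apply: mem_quotient; case: (morph_preP z).
- move=> _ /morphimP[u _ Hu ->]; exists (pi u).
  by have [Hp pp] := morph_preP (pi u); apply/coset_ker_pi.
- move=> z z'; have [Hz pz] := morph_preP z; have [Hz' pz'] := morph_preP z'.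
  have [Hzz' pzz'] := morph_preP (z ** z').
  have nH := subsetP (normal_norm normal_ker_pi).
  rewrite -coset_morphM ?nH //; apply/coset_ker_pi; rewrite ?groupM //.
  by rewrite pzz' piM // pz pz'.
Qed.

End OntoMorphism.

Definition D8_image (G : Grp) : Prop :=
  exists a b : G, [/\ gpow a 4 = gone G, gmul b b = gone G,
    gmul (gmul a b) (gmul a b) = gone G
  & forall z, exists2 c, c \in codes8 & abpow a b c = z].

Definition C4_image (G : Grp) : Prop :=
  exists a : G, gpow a 4 = gone G /\ forall z, exists2 i, i < 4 & gpow a i = z.

Section Classification.
Variable G : Grp.
Implicit Types a b t u v z : G.
Local Notation "x ** y" := (gmul x y) (at level 40, left associativity).
Local Notation e := (gone G).

Lemma id2_exp4 : holds G id2 -> forall t, gpow t 4 = e.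
Proof.
move=> h t; have [w] := h (fun _ => t).
by case=> [<-|[]]; rewrite /= gmul1r !gmulA.
Qed.

Lemma id3_sq1 : holds G id3 -> forall x1 x2 x3, x1 ** x1 <> e -> x2 ** x2 <> e ->
  x1 <> x2 -> x3 <> x1 -> x3 <> x2 -> x3 ** x3 = e.
Proof.
move=> h x1 x2 x3 x1_2 x2_2 x12 x31 x32.
have [w w_id3] := h (fun n => if n == 1 then x1 else if n == 2 then x2 else x3).
by case: w_id3 => [<-|[<-|[<-|[<-|[<-|[<-|[]]]]]]] //= /gmulV_eq1 // /esym.
Qed.

Section Order4.
Hypotheses (exp4 : forall t, gpow t 4 = e) (omega : holds G omega8) (id3G : holds G id3).
Variable a : G.
Hypothesis a2 : a ** a <> e.

Lemma order4_neq : [/\ a <> e, gpow a 3 <> e & a <> gpow a 3].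
Proof.
have a4 : a ** gpow a 3 = e := exp4 a.
split=> [a1|a3|a_a3]; apply: a2.
- by rewrite a1 gmul1.
- by rewrite a3 gmul1r in a4; rewrite a4 gmul1.
- by rewrite {2}a_a3.
Qed.

Lemma sq1_neq_a_a3 t : t <> a -> t <> gpow a 3 -> t ** t = e.
Proof.
have [_ _ a_a3] := order4_neq.
have a3_2 : gpow a 3 ** gpow a 3 <> e by rewrite -gpowD (gpow_mod _ (exp4 a)) /= gmul1r.
by move=> ta ta3; apply: (id3_sq1 id3G a2 a3_2).
Qed.

Lemma order4_D8_image b : (forall i, i < 4 -> b <> gpow a i) -> D8_image G.
Proof.
move=> b_out; have [a1 a3 _] := order4_neq.
have b2 : b ** b = e.
  by apply: sq1_neq_a_a3 (b_out 3 isT) => ba; apply: (b_out 1); rewrite // ba /= gmul1r.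
have ab2 : (a ** b) ** (a ** b) = e.
  apply: sq1_neq_a_a3 => [ab_a|ab_a3].
    by apply: (b_out 0) => //; apply: (@gmulI _ a); rewrite ab_a /= gmul1r.
  by apply: (b_out 2) => //; apply: (@gmulI _ a); rewrite ab_a3.
have ab_faithful c : c \in codes8 -> abpow a b c = e -> c = cone.
  case: c => i [|[|j]]; rewrite mem_codes8 /= ?andbT ?andbF // => lt_i4.
    by rewrite /abpow /= gmul1r; case: i lt_i4 => [|[|[|[|i]]]] // _; rewrite /= ?gmul1r.
  rewrite /abpow /= gmul1r => abi1; have := b_out ((4 - i) %% 4); rewrite ltn_mod.
  case=> //; rewrite -(gpow_mod _ (exp4 a)) -(ginv_eq abi1); apply: ginv_eq.
  by rewrite -gpowD subnKC ?exp4 // ltnW.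
exists a, b; split=> //; exact: abpow_onto.
Qed.

Lemma order4_image : D8_image G \/ C4_image G.
Proof.
case: (classic (exists b, forall i, i < 4 -> b <> gpow a i)) => [[b b_out]|no_b].
  by left; exact: order4_D8_image b_out.
right; exists a; split=> // z; apply: NNPP => z_out; apply: no_b; exists z.
by move=> i lt_i4 zi; apply: z_out; exists i.
Qed.

End Order4.

Section Exponent2.
Hypothesis sq1 : forall t, t ** t = e.

Lemma gmulC t t' : t ** t' = t' ** t.
Proof.
have tt' := ginv_eq (sq1 (t ** t')).
by rewrite ginvM (ginv_eq (sq1 t)) (ginv_eq (sq1 t')) in tt'.
Qed.

Definition bpow t (k : bool) := if k then t else e.

Lemma bpowD t k l : bpow t k ** bpow t l = bpow t (k (+) l).
Proof. by case: k; case: l; rewrite /= ?gmul1 ?gmul1r ?sq1. Qed.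

Section Rank3.
Variables u v z : G.

Definition uvz (p : bool * bool * bool) := (bpow u p.1.1 ** bpow v p.1.2) ** bpow z p.2.
Definition xor3 (p q : bool * bool * bool) : bool * bool * bool :=
  (p.1.1 (+) q.1.1, p.1.2 (+) q.1.2, p.2 (+) q.2).

Lemma uvzM p q : uvz (xor3 p q) = uvz p ** uvz q.
Proof.
have mulACA (x1 x2 y1 y2 : G) : (x1 ** x2) ** (y1 ** y2) = (x1 ** y1) ** (x2 ** y2).
  by rewrite -!gmulA (gmulA x2) (gmulC x2 y1) -(gmulA y1).
by rewrite /uvz [RHS]mulACA (mulACA (bpow u _)) !bpowD.
Qed.

Lemma uvzV p : uvz p = ginv (uvz p).
Proof. by symmetry; apply: ginv_eq; apply: sq1. Qed.

Lemma uvz0 : uvz (false, false, false) = e.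
Proof. by rewrite /uvz /= !gmul1. Qed.

Lemma uvz_faithful : u <> e -> v <> e -> u <> v -> z <> e -> z <> u -> z <> v ->
  z <> u ** v -> forall p, uvz p = e -> p = (false, false, false).
Proof.
have sq1_eq t t' : t ** t' = e -> t = t' by move=> tt'; rewrite -(ginv_eq tt') (ginv_eq (sq1 t)).
by move=> u1 v1 uv z1 zu zv zuv [[[] []] []]; rewrite /uvz /= ?gmul1 ?gmul1r => // /sq1_eq // /esym.
Qed.

Definition basis3 (n : nat) : bool * bool * bool := nth (false, false, false)
  [:: (false, false, false); (true, false, false); (false, true, false); (false, false, true)] n.

Lemma id4_not_rank3 : holds G id4 ->
  ~ (forall p, uvz p = e -> p = (false, false, false)).
Proof.
move=> id4G uvz_faithful; have [w w_id4] := id4G (fun n => uvz (basis3 n)).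
rewrite (weval_morph uvzM uvzV uvz0) => /uvz_faithful; apply/eqP; move: w w_id4.
have /allP chk : all (fun w => weval xor3 id (false, false, false) basis3 w
  != (false, false, false)) id4 by vm_compute.
by move=> w /In_mem /chk.
Qed.

End Rank3.

Lemma exponent2_cover : holds G id4 ->
  exists u v, forall z, [\/ z = e, z = u, z = v | z = u ** v].
Proof.
move=> id4G; case: (classic (exists u, u <> e)) => [[u u1]|all1]; last first.
  by exists e, e => z; constructor 1; apply: NNPP => z1; apply: all1; exists z.
case: (classic (exists v, v <> e /\ v <> u)) => [[v [v1 vu]]|no_v]; last first.
  exists u, e => z; case: (classic (z = e)) => [|z1]; first by constructor 1.
  by constructor 2; apply: NNPP => zu; apply: no_v; exists z.
have uv : u <> v by move/esym.
exists u, v => z; apply: NNPP => z_out; apply: (@id4_not_rank3 u v z id4G).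
apply: uvz_faithful => // zw; apply: z_out; rewrite zw;
  by [constructor 1 | constructor 2 | constructor 3 | constructor 4].
Qed.

Lemma exponent2_image : holds G id4 -> D8_image G.
Proof.
move=> /exponent2_cover[u [v cover]].
exists u, v; split=> //=; first by rewrite gmul1r sq1 gmul1r sq1.
move=> z; case: (cover z) => ->; [exists (0, 0) | exists (1, 0) | exists (0, 1) | exists (1, 1)];
  by rewrite // /abpow /= ?gmul1 ?gmul1r.
Qed.

End Exponent2.

Lemma basis_image : holds G omega8 -> holds G id2 -> holds G id3 -> holds G id4 ->
  D8_image G \/ C4_image G.
Proof.
move=> omega /id2_exp4 exp4 id3G id4G.
case: (classic (exists a, a ** a <> e)) => [[a a2]|all_sq1]; first exact: order4_image a2.
by left; apply: exponent2_image id4G => t; apply: NNPP => t2; apply: all_sq1; exists t.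
Qed.

End Classification.

Definition GD8 : Grp :=
  @MkGrp 'D_8 (fun u v => u * v)%g (fun u => u^-1)%g 1%g (@mulgA _) (@mul1g _) (@mulVg _).

Lemma gpowE (u : 'D_8) n : @gpow GD8 u n = (u ^+ n)%g.
Proof. by elim: n => [|n IH] /=; rewrite ?expgS ?IH. Qed.

Lemma fholds_D8_omega8 : fholds 'D_8 omega8.
Proof. by apply: fholds_omega8; rewrite -cardsT (@card_2dihedral 3). Qed.

(* Checks d in coordinates, for the assignments of x_0..x_3; members of d that
   mention other variables are ignored. *)
Definition sat_codes (d : didentity) : bool :=
  all (fun c0 => all (fun c1 => all (fun c2 => all (fun c3 =>
    has (fun w => all (leq^~ 3) (wvars w) &&
      (weval cmul cinv cone (nth cone [:: c0; c1; c2; c3]) w == cone)) d)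
  codes8) codes8) codes8) codes8.

Section D8.
Local Open Scope group_scope.
Local Notation D8 := (dihedral_gtype 8).
Variables x y : D8.
Hypotheses (ox : #[x] = 4) (oy : #[y] = 2) (xy : x ^ y = x^-1) (y_notin_x : y \notin <[x]>).
Local Notation xypow := (@abpow GD8 x y).

Lemma x4 : @gpow GD8 x 4 = 1.
Proof. by rewrite gpowE; have := expg_order x; rewrite ox. Qed.

Lemma y2 : y * y = 1.
Proof. by rewrite -expg2; have := expg_order y; rewrite oy. Qed.

Lemma xy2 : (x * y) * (x * y) = 1.
Proof.
have yV : y^-1 = y by rewrite invg_expg oy expg1.
by rewrite -mulgA -{1}yV -conjgE xy mulgV.
Qed.

Lemma xypow_faithful c : c \in codes8 -> xypow c = 1 -> c = cone.
Proof.
case: c => i [|[|j]]; rewrite mem_codes8 /= ?andbT ?andbF // => lt_i4;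
  rewrite /abpow /= !gpowE ?expg0 ?expg1 ?mulg1 => h.
  have : #[x] %| i by rewrite order_dvdn h.
  by rewrite ox; case: i lt_i4 {h} => [|[|[|[|i]]]].
have y_xi : y = (x ^+ i)^-1 by rewrite -(mulKg (x ^+ i) y) h mulg1.
by move: y_notin_x; rewrite y_xi groupV mem_cycle.
Qed.

Lemma xypow_onto u : exists2 c, c \in codes8 & xypow c = u.
Proof. exact: abpow_onto x4 y2 xy2 xypow_faithful fholds_D8_omega8 u. Qed.

Definition dcode u := nth cone codes8 (find (fun c => xypow c == u) codes8).

Lemma has_xypow u : has (fun c => xypow c == u) codes8.
Proof. by have [c c8 cu] := xypow_onto u; apply/hasP; exists c => //; apply/eqP. Qed.

Lemma dcode_codes8 u : dcode u \in codes8.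
Proof. by rewrite mem_nth // -has_find has_xypow. Qed.

Lemma dcodeK : cancel dcode xypow.
Proof. by move=> u; apply/eqP/(nth_find cone (has_xypow u)). Qed.

Lemma xypowK : {in codes8, cancel xypow dcode}.
Proof.
move=> c c8; apply: (abpow_inj x4 y2 xy2 xypow_faithful) => //.
  exact: dcode_codes8.
exact: dcodeK.
Qed.

Lemma dcodeM u v : dcode (u * v) = cmul (dcode u) (dcode v).
Proof.
rewrite -[u in LHS]dcodeK -[v in LHS]dcodeK.
by rewrite -[_ * _]/(gmul _ _) -(abpowM x4 y2 xy2) xypowK ?cmul_codes8.
Qed.

Lemma sat_codes_fholds d : sat_codes d -> fholds D8 d.
Proof.
move=> sat s; pose c := nth cone [:: dcode (s 0); dcode (s 1%N); dcode (s 2%N); dcode (s 3%N)].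
move/allP/(_ _ (dcode_codes8 (s 0)))/allP/(_ _ (dcode_codes8 (s 1%N))): sat.
move/allP/(_ _ (dcode_codes8 (s 2%N)))/allP/(_ _ (dcode_codes8 (s 3%N)))/hasP.
case=> w /In_mem w_d /andP[/allP w_vars /eqP w_1]; exists w => //.
rewrite (@eq_weval _ _ _ _ s (fun n => xypow (c n))).
  by rewrite (weval_abpow x4 y2 xy2) w_1 abpow_cone.
by move=> [|[|[|[|n]]]] /w_vars // _; exact/esym/dcodeK.
Qed.

Lemma D8_image_iso_section (G : Grp) : D8_image G -> iso_section D8 G.
Proof.
case=> a [b [a4 b2 ab2 ab_onto]].
apply: (@onto_morph_iso_section _ G [set: D8]%G (fun u => abpow a b (dcode u))).
  by move=> u v _ _; rewrite dcodeM abpowM.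
move=> z; have [c c8 <-] := ab_onto z; exists (xypow c).
by rewrite inE xypowK.
Qed.

Lemma C4_image_iso_section (G : Grp) : C4_image G -> iso_section D8 G.
Proof.
case=> a [a4 a_onto].
have dcode_xpow i : dcode (x ^+ i) = (i %% 4, 0).
  have -> : x ^+ i = xypow (i %% 4, 0).
    by rewrite /abpow /= gpowE mulg1; have := expg_mod_order x i; rewrite ox.
  by rewrite xypowK // (mod_codes8 i 0).
apply: (@onto_morph_iso_section _ G <[x]>%G (fun u => gpow a (dcode u).1)).
  move=> _ _ /cycleP[i ->] /cycleP[k ->].
  by rewrite -expgD !dcode_xpow /= -!(gpow_mod _ a4) gpowD.
move=> z; have [i lt_i4 <-] := a_onto z; exists (x ^+ i).
by rewrite mem_cycle dcode_xpow /= modn_small.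
Qed.

End D8.

Theorem proposition1 :
  (fholds 'D_8 omega8 /\ fholds 'D_8 id2 /\ fholds 'D_8 id3 /\ fholds 'D_8 id4) /\
  (forall G : Grp, holds G omega8 -> holds G id2 -> holds G id3 -> holds G id4 ->
     iso_section 'D_8 G).
Proof.
have [[x y] [_ _ ox /setDP[_ y_notin_x]] [oy xy]] :=
  @generators_2dihedral _ [set: 'D_8]%G 3 isT (isog_refl _).
have sat := sat_codes_fholds ox oy xy y_notin_x.
split; first by split; [exact: fholds_D8_omega8 | do 2?split; apply: sat; vm_compute].
move=> G omega id2G id3G id4G; case: (basis_image omega id2G id3G id4G).
  exact: D8_image_iso_section ox oy xy y_notin_x G.
exact: C4_image_iso_section ox oy xy y_notin_x G.
Qed.
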